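(* Fix finite nonempty $A$, $\Omega$, a full-support prior $\mu_0$ on $\Omega$, and a finite $M$ with $|M|>\max\{|\Omega|,|A|\}$. There is a set of transparent environments of Lebesgue measure one in $[0,1]^{|A|(|\Omega|+1)}$ such that, for every environment in it, commitment is valuable if and only if committed Sender values randomization.
   Context: An environment $(u_S,u_R)$ with $u_S,u_R:A\times\Omega\to[0,1]$ is transparent if there is $v:A\to[0,1]$ with $u_S(a,\omega)=v(a)$ for all $a,\omega$; the set of transparent environments is identified with $[0,1]^{|A|(|\Omega|+1)}$ (coordinates $v$ and $u_R$). Messaging strategies $\sigma:\Omega\to\Delta M$, action strategies $\rho:M\to\Delta A$, $U_i(\sigma,\rho)=\sum_{\omega,m,a}\mu_0(\omega)\sigma(m|\omega)\rho(a|m)u_i(a,\omega)$. $(\sigma,\rho)$ is S-BR if $\sigma\in\arg\max_{\sigma'}U_S(\sigma',\rho)$ and R-BR if $\rho\in\arg\max_{\rho'}U_R(\sigma,\rho')$. Persuasion payoff: max of $U_S$ over R-BR profiles; cheap-talk payoff: max over profiles that are S-BR and R-BR. Commitment is valuable if persuasion payoff > cheap-talk payoff. $\sigma$ is partitional if for every $\omega$ some $m$ has $\sigma(m|\omega)=1$. Partitional persuasion payoff: max of $U_S$ over R-BR profiles with partitional $\sigma$. Committed Sender values randomization if persuasion payoff > partitional persuasion payoff. *)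

From mathcomp Require Import all_boot all_order all_algebra.
From mathcomp Require Import boolp classical_sets reals.
Set Implicit Arguments. Unset Strict Implicit. Unset Printing Implicit Defensive.
Import Order.TTheory GRing.Theory Num.Theory.
Local Open Scope ring_scope.

Section Game.
Variables (R : realType) (A Om M : finType).

Definition is_distr (T : finType) (p : T -> R) :=
  (forall t, 0 <= p t) /\ \sum_(t : T) p t = 1.

(** Messaging strategies sigma : Omega -> Delta M, written sigma w m = sigma(m|w);
    action strategies rho : M -> Delta A, written rho m a = rho(a|m). *)
Definition msg_strategy (sigma : Om -> M -> R) := forall w, is_distr (sigma w).
Definition act_strategy (rho : M -> A -> R) := forall m, is_distr (rho m).

Definition U (mu0 : Om -> R) (u : A -> Om -> R)
  (sigma : Om -> M -> R) (rho : M -> A -> R) : R :=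
  \sum_(w : Om) \sum_(m : M) \sum_(a : A) mu0 w * sigma w m * rho m a * u a w.

Definition S_BR mu0 uS sigma rho :=
  msg_strategy sigma /\ act_strategy rho /\
  forall sigma', msg_strategy sigma' -> U mu0 uS sigma' rho <= U mu0 uS sigma rho.

Definition R_BR mu0 uR sigma rho :=
  msg_strategy sigma /\ act_strategy rho /\
  forall rho', act_strategy rho' -> U mu0 uR sigma rho' <= U mu0 uR sigma rho.

Definition partitional (sigma : Om -> M -> R) :=
  forall w, exists m, sigma w m = 1.

(** Payoffs (the maxima of the paper, written as suprema; the maxima exist). *)
Definition persuasion_payoff mu0 uS uR : R :=
  sup [set x | exists sigma rho, R_BR mu0 uR sigma rho /\ x = U mu0 uS sigma rho].

Definition cheap_talk_payoff mu0 uS uR : R :=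
  sup [set x | exists sigma rho,
         S_BR mu0 uS sigma rho /\ R_BR mu0 uR sigma rho /\ x = U mu0 uS sigma rho].

Definition partitional_persuasion_payoff mu0 uS uR : R :=
  sup [set x | exists sigma rho, R_BR mu0 uR sigma rho /\ partitional sigma /\
                                 x = U mu0 uS sigma rho].

Definition commitment_valuable mu0 uS uR :=
  cheap_talk_payoff mu0 uS uR < persuasion_payoff mu0 uS uR.

Definition values_randomization mu0 uS uR :=
  partitional_persuasion_payoff mu0 uS uR < persuasion_payoff mu0 uS uR.

(** Transparent environments: coordinates indexed by A + A * Omega,
    x (inl a) = v a and x (inr (a, w)) = u_R (a, w). *)
Definition env_coord := (A + (A * Om))%type.
Definition env_v (x : env_coord -> R) : A -> Om -> R := fun a _ => x (inl a).
Definition env_uR (x : env_coord -> R) : A -> Om -> R := fun a w => x (inr (a, w)).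

End Game.

Section Lebesgue.
Variables (R : realType) (I : finType).

Definition unit_cube (x : I -> R) := forall i, 0 <= x i <= 1.
Definition in_box (a b x : I -> R) := forall i, a i <= x i <= b i.
Definition box_vol (a b : I -> R) : R := \prod_(i : I) (b i - a i).

Definition lebesgue_null (N : (I -> R) -> Prop) :=
  forall eps : R, 0 < eps -> exists (a b : nat -> I -> R),
    (forall k i, a k i <= b k i) /\
    (forall x, N x -> exists k, in_box (a k) (b k) x) /\
    (forall n, \sum_(k < n) box_vol (a k) (b k) <= eps).

(** E has Lebesgue measure one in [0,1]^I: E is a subset of the cube whose
    complement in the cube is null (hence E is measurable of measure 1). *)
Definition full_measure_in_cube (E : (I -> R) -> Prop) :=
  (forall x, E x -> unit_cube x) /\
  lebesgue_null (fun x => unit_cube x /\ ~ E x).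
End Lebesgue.

From mathcomp Require Import all_boot all_order all_algebra.
From mathcomp Require Import boolp classical_sets reals.
From mathcomp Require Import ring lra.
Set Implicit Arguments. Unset Strict Implicit. Unset Printing Implicit Defensive.
Import Order.TTheory GRing.Theory Num.Theory.
Local Open Scope ring_scope.

(* Call an environment generic if [v] is injective and the Receiver is never
   indifferent between two actions at the posterior of a nonempty set of states;
   the other environments lie on finitely many hyperplanes, a null set.  In a
   generic environment, "commitment is not valuable" and "randomization is not
   valuable" are both equivalent to the persuasion payoff being the babbling
   payoff [v a0], where [a0] is the Receiver's optimal action at the prior.
   If partitional signals come close to the persuasion payoff, the Receiver
   answers them purely, with a uniform strict margin; were two messages to
   induce different actions, shifting a little weight from the worse to the
   better one would gain a uniform amount, so a single action is induced, and
   it is [a0].  If cheap talk comes close, the Sender's indifference gives all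
   used messages the same value; letting the Receiver break ties in the Sender's
   favour yields a persuasion profile, so the messages whose best reply is above
   the lowest induced action carry little mass, that action is nearly optimal
   at the prior, hence it is [a0]. *)

Section RealFacts.
Context {R : realType}.

Lemma sum_delta (I : finType) (j : I) (F : I -> R) :
  \sum_(i : I) (i == j)%:R * F i = F j.
Proof.
rewrite (bigD1 j) //= eqxx mul1r big1 ?addr0 // => i /negbTE ->.
by rewrite mul0r.
Qed.

Lemma sum_delta1 (I : finType) (j : I) : \sum_(i : I) (i == j)%:R = 1 :> R.
Proof. by rewrite (eq_bigr (fun i => (i == j)%:R * 1)) ?sum_delta // => i _; rewrite mulr1. Qed.

Lemma fin_pos_lower_bound (T : finType) (P : pred T) (f : T -> R) :
  (forall t, P t -> 0 < f t) -> exists2 e, 0 < e & forall t, P t -> e <= f t.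
Proof.
move=> f_gt0; case: (pickP P) => [t0 Pt0|noP]; last first.
  by exists 1 => // t; rewrite noP.
case: (arg_minP f Pt0) => t Pt t_min.
by exists (f t); [exact: f_gt0 | exact: t_min].
Qed.

Lemma le_sup_bounded (S : set R) x b : S x -> (forall y, S y -> y <= b) -> x <= sup S.
Proof. by move=> Sx S_le; apply: sup_upper_bound => //; split; [exists x | exists b]. Qed.

End RealFacts.

Section Signaling.
Context {R : realType} {A Om M : finType}.
Variable mu0 : Om -> R.
Hypothesis prior : is_distr mu0.
Implicit Types (s : Om -> M -> R) (r : M -> A -> R) (u : A -> Om -> R) (h : Om -> R).

Definition prior_exp h := \sum_(w : Om) mu0 w * h w.

(* The expectation of [h] on the event that [m] is sent: the posterior
   expectation of [h] given [m], times the probability of [m]. *)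
Definition msg_exp s m h := \sum_(w : Om) mu0 w * s w m * h w.
Definition msg_mass s m := msg_exp s m (fun=> 1).

Definition pure_act (f : M -> A) : M -> A -> R := fun m a => (a == f m)%:R.
Definition const_msg (m0 : M) : Om -> M -> R := fun _ m => (m == m0)%:R.

Definition best_reply u s m a := forall b, msg_exp s m (u b) <= msg_exp s m (u a).
Definition best_selection u s (f : M -> A) := forall m, best_reply u s m (f m).

Definition tie_free u := forall (C : {set Om}) a b, (0 < #|C|)%N -> a != b ->
  \sum_(w in C) mu0 w * u a w != \sum_(w in C) mu0 w * u b w.

Lemma prior_exp_const c : prior_exp (fun=> c) = c.
Proof. by rewrite /prior_exp -mulr_suml prior.2 mul1r. Qed.

Lemma msg_exp_const s m c : msg_exp s m (fun=> c) = msg_mass s m * c.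
Proof. by rewrite /msg_mass /msg_exp mulr_suml; apply: eq_bigr => w _; ring. Qed.

Lemma U_msg_exp u s r :
  U mu0 u s r = \sum_(m : M) \sum_(a : A) r m a * msg_exp s m (u a).
Proof.
rewrite /U exchange_big; apply: eq_bigr => m _; rewrite exchange_big.
by apply: eq_bigr => a _; rewrite /msg_exp mulr_sumr; apply: eq_bigr => w _; ring.
Qed.

Lemma U_transparent (v : A -> R) s r :
  U mu0 (fun a _ => v a) s r = \sum_(m : M) msg_mass s m * \sum_(a : A) r m a * v a.
Proof.
rewrite U_msg_exp; apply: eq_bigr => m _; rewrite mulr_sumr.
by apply: eq_bigr => a _; rewrite msg_exp_const; ring.
Qed.

Lemma sum_pure_act f m (F : A -> R) : \sum_(a : A) pure_act f m a * F a = F (f m).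
Proof. exact: sum_delta. Qed.

Lemma pure_act_strategy f : act_strategy (pure_act f).
Proof.
by move=> m; split=> [a|]; [rewrite ler0n | exact: sum_delta1].
Qed.

Lemma const_msg_strategy m0 : msg_strategy (const_msg m0).
Proof.
by move=> w; split=> [m|]; [rewrite ler0n | exact: sum_delta1].
Qed.

Lemma const_msg_partitional m0 : partitional (const_msg m0).
Proof. by move=> w; exists m0; rewrite /const_msg eqxx. Qed.

Lemma msg_exp_const_msg m0 m h : msg_exp (const_msg m0) m h = (m == m0)%:R * prior_exp h.
Proof. by rewrite /msg_exp /const_msg mulr_sumr; apply: eq_bigr => w _; ring. Qed.

Lemma msg_exp_bounds s m h : msg_strategy s -> (forall w, 0 <= h w <= 1) ->
  0 <= msg_exp s m h <= msg_mass s m.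
Proof.
move=> ss h01; have sw_ge0 w : 0 <= mu0 w * s w m.
  by apply: mulr_ge0; [exact: prior.1 | exact: (ss w).1].
apply/andP; split; first by apply: sumr_ge0 => w _; rewrite mulr_ge0 //; case/andP: (h01 w).
by apply: ler_sum => w _; rewrite mulr1 ler_piMr //; case/andP: (h01 w).
Qed.

Lemma msg_mass_ge0 s m : msg_strategy s -> 0 <= msg_mass s m.
Proof.
by move=> ss; apply: sumr_ge0 => w _; rewrite mulr1 mulr_ge0 //; [exact: prior.1 | exact: (ss w).1].
Qed.

Lemma msg_exp_sum s h : msg_strategy s -> \sum_(m : M) msg_exp s m h = prior_exp h.
Proof.
move=> ss; rewrite /msg_exp exchange_big; apply: eq_bigr => w _.
under eq_bigr do rewrite mulrAC.
by rewrite -mulr_sumr (ss w).2 mulr1.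
Qed.

Lemma msg_mass_sum s : msg_strategy s -> \sum_(m : M) msg_mass s m = 1.
Proof. by move=> ss; rewrite msg_exp_sum // prior_exp_const. Qed.

Lemma msg_mass_le1 s m : msg_strategy s -> msg_mass s m <= 1.
Proof.
move=> ss; rewrite -(msg_mass_sum ss) (bigD1 m) //= lerDl.
by apply: sumr_ge0 => m' _; exact: msg_mass_ge0.
Qed.

Lemma exists_used_msg s : msg_strategy s -> exists m, msg_mass s m != 0.
Proof.
move=> ss; apply/existsP; apply: contraT; rewrite negb_exists => /forallP unused.
have := msg_mass_sum ss; rewrite big1 => [/eqP|m _]; first by rewrite eq_sym oner_eq0.
by apply/eqP; have := unused m; rewrite negbK.
Qed.

Lemma U_le1 u s r : (forall a w, 0 <= u a w <= 1) ->
  msg_strategy s -> act_strategy r -> U mu0 u s r <= 1.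
Proof.
move=> u01 ss rr; rewrite U_msg_exp -(msg_mass_sum ss); apply: ler_sum => m _.
rewrite -[leRHS]mul1r -(rr m).2 mulr_suml; apply: ler_sum => a _.
apply: ler_wpM2l; first exact: (rr m).1.
by case/andP: (msg_exp_bounds m ss (u01 a)).
Qed.

Lemma pure_RBR u s f : msg_strategy s -> best_selection u s f -> R_BR mu0 u s (pure_act f).
Proof.
move=> ss f_best; split=> //; split=> [|r rr]; first exact: pure_act_strategy.
rewrite !U_msg_exp; apply: ler_sum => m _; rewrite sum_pure_act.
rewrite -[leRHS]mul1r -(rr m).2 mulr_suml; apply: ler_sum => a _.
by apply: ler_wpM2l; [exact: (rr m).1 | exact: f_best].
Qed.

(* Switching from [r] to [f] gains [r m a] times a nonnegative gap at every
   [(m, a)]; optimality of [r] forces all these gains to vanish. *)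
Lemma RBR_support u s r f m a : R_BR mu0 u s r -> best_selection u s f ->
  r m a != 0 -> msg_exp s m (u a) = msg_exp s m (u (f m)).
Proof.
move=> [ss [rr r_best]] f_best r_ne0.
pose gain m a := r m a * (msg_exp s m (u (f m)) - msg_exp s m (u a)).
have gain_ge0 m' a' : 0 <= gain m' a'.
  by rewrite mulr_ge0 ?subr_ge0 //; [exact: (rr m').1 | exact: f_best].
have gain_sum : \sum_m' \sum_a' gain m' a' = U mu0 u s (pure_act f) - U mu0 u s r.
  rewrite !U_msg_exp -sumrB; apply: eq_bigr => m' _.
  rewrite sum_pure_act /gain; under eq_bigr do rewrite mulrBr.
  by rewrite sumrB -mulr_suml (rr m').2 mul1r.
have gain0 : \sum_m' \sum_a' gain m' a' = 0.
  apply/le_anti/andP; split; last by apply: sumr_ge0 => m' _; apply: sumr_ge0.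
  by rewrite gain_sum subr_le0 r_best //; exact: pure_act_strategy.
have gain_m0 : \sum_a' gain m a' = 0.
  by apply: (psumr_eq0P _ gain0) => // m' _; apply: sumr_ge0.
have /eqP : gain m a = 0 by apply: (psumr_eq0P _ gain_m0).
by rewrite mulf_eq0 (negbTE r_ne0) subr_eq0 => /eqP.
Qed.

Lemma U_pure (v : A -> R) s f :
  U mu0 (fun a _ => v a) s (pure_act f) = \sum_(m : M) msg_mass s m * v (f m).
Proof. by rewrite U_transparent; apply: eq_bigr => m _; rewrite sum_pure_act. Qed.

Lemma U_const_act (v : A -> R) s a : msg_strategy s ->
  U mu0 (fun a _ => v a) s (pure_act (fun=> a)) = v a.
Proof. by move=> ss; rewrite U_pure -mulr_suml msg_mass_sum // mul1r. Qed.

Lemma const_act_SBR (v : A -> R) s a :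
  msg_strategy s -> S_BR mu0 (fun a _ => v a) s (pure_act (fun=> a)).
Proof.
move=> ss; split=> //; split=> [|s' ss']; first exact: pure_act_strategy.
by rewrite !U_const_act.
Qed.

Lemma RBR_unique_pure (v : A -> R) u s r f : R_BR mu0 u s r -> best_selection u s f ->
  (forall m a, msg_mass s m != 0 -> a != f m -> msg_exp s m (u a) != msg_exp s m (u (f m))) ->
  U mu0 (fun a _ => v a) s r = U mu0 (fun a _ => v a) s (pure_act f).
Proof.
move=> sr_RBR f_best f_strict; have rr := sr_RBR.2.1.
rewrite U_transparent U_pure; apply: eq_bigr => m _.
have [->|m_used] := eqVneq (msg_mass s m) 0; first by rewrite !mul0r.
congr (_ * _); rewrite -[RHS]mul1r -(rr m).2 mulr_suml; apply: eq_bigr => a _.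
have [->|r_ne0] := eqVneq (r m a) 0; first by rewrite !mul0r.
have [->//|a_ne] := eqVneq a (f m).
by have := f_strict m a m_used a_ne; rewrite (RBR_support sr_RBR f_best r_ne0) eqxx.
Qed.

Lemma exists_best_selection_max u s (v : A -> R) (a0 : A) :
  exists2 f, best_selection u s f & forall m b, best_reply u s m b -> v b <= v (f m).
Proof.
pose g m := [arg max_(b > a0) msg_exp s m (u b)]%O.
have g_best m : best_reply u s m (g m) by rewrite /g; case: arg_maxP => // b _ b_max c; exact: b_max.
pose best m b := [forall c, msg_exp s m (u c) <= msg_exp s m (u b)].
have bestP m b : reflect (best_reply u s m b) (best m b) by exact: forallP.
exists (fun m => [arg max_(b > g m | best m b) v b]%O) => m.
  by case: arg_maxP => [|b /bestP //]; exact/bestP/g_best.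
move=> b b_best; case: arg_maxP => [|c _ c_max]; first exact/bestP/g_best.
exact/c_max/bestP.
Qed.

Lemma RBR_value_le_max (v : A -> R) u s r f m : R_BR mu0 u s r -> best_selection u s f ->
  (forall b, best_reply u s m b -> v b <= v (f m)) -> \sum_(a : A) r m a * v a <= v (f m).
Proof.
move=> sr_RBR f_best f_max; have rr := sr_RBR.2.1.
rewrite -[leRHS]mul1r -(rr m).2 mulr_suml; apply: ler_sum => a _.
have [->|r_ne0] := eqVneq (r m a) 0; first by rewrite !mul0r.
apply: ler_wpM2l; first exact: (rr m).1.
by apply: f_max => c; rewrite (RBR_support sr_RBR f_best r_ne0); exact: f_best.
Qed.

Lemma SBR_msg_value_le (v : A -> R) s r m : S_BR mu0 (fun a _ => v a) s r ->
  \sum_(a : A) r m a * v a <= U mu0 (fun a _ => v a) s r.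
Proof.
move=> [_ [_ s_best]]; have := s_best _ (const_msg_strategy m).
rewrite U_transparent; under eq_bigr do rewrite /msg_mass msg_exp_const_msg prior_exp_const mulr1.
by rewrite sum_delta.
Qed.

Lemma SBR_msg_value_used (v : A -> R) s r m : S_BR mu0 (fun a _ => v a) s r ->
  msg_mass s m != 0 -> \sum_(a : A) r m a * v a = U mu0 (fun a _ => v a) s r.
Proof.
move=> sr_SBR m_used; set K := U _ _ _ _.
have loss_ge0 m' : 0 <= msg_mass s m' * (K - \sum_(a : A) r m' a * v a).
  by rewrite mulr_ge0 ?msg_mass_ge0 ?subr_ge0 ?SBR_msg_value_le //; case: sr_SBR.
have loss0 : \sum_m' msg_mass s m' * (K - \sum_(a : A) r m' a * v a) = 0.
  under eq_bigr do rewrite mulrBr.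
  by rewrite sumrB -mulr_suml msg_mass_sum ?mul1r -?U_transparent ?subrr //; case: sr_SBR.
have /eqP : msg_mass s m * (K - \sum_(a : A) r m a * v a) = 0.
  by apply: (psumr_eq0P _ loss0).
by rewrite mulf_eq0 (negbTE m_used) subr_eq0 => /eqP.
Qed.

Lemma prior_exp_loss u s f a b : msg_strategy s -> (forall a w, 0 <= u a w <= 1) ->
  best_selection u s f ->
  prior_exp (u b) - prior_exp (u a) <= \sum_(m | f m != a) msg_mass s m.
Proof.
move=> ss u01 f_best; rewrite -!(msg_exp_sum _ ss) -sumrB [leRHS]big_mkcond /=.
apply: ler_sum => m _; case: eqVneq => [<-|_] /=; first by rewrite subr_le0 f_best.
have /andP[? ?] := msg_exp_bounds m ss (u01 b).
have /andP[? ?] := msg_exp_bounds m ss (u01 a).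
lra.
Qed.

Definition cell s m : {set Om} := [set w | s w m == 1].

Lemma partitional_cell s w m : msg_strategy s -> partitional s ->
  s w m = (w \in cell s m)%:R.
Proof.
move=> ss sp; rewrite inE; have [m' sm'] := sp w.
have [->|m_ne] := eqVneq m m'; first by rewrite sm' eqxx.
have others0 : \sum_(m'' | m'' != m') s w m'' = 0.
  by have := (ss w).2; rewrite (bigD1 m') //= sm' -[X in _ = X]addr0 => /addrI.
have -> : s w m = 0 by apply: (psumr_eq0P _ others0) => // m'' _; exact: (ss w).1.
by rewrite eq_sym oner_eq0.
Qed.

Lemma msg_exp_partitional s m h : msg_strategy s -> partitional s ->
  msg_exp s m h = \sum_(w in cell s m) mu0 w * h w.
Proof.
move=> ss sp; rewrite /msg_exp [RHS]big_mkcond; apply: eq_bigr => w _.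
by rewrite (partitional_cell w m ss sp); case: (_ \in _); rewrite /= ?mulr1 ?mulr0 ?mul0r.
Qed.

Lemma partitional_used_cell s m : msg_strategy s -> partitional s ->
  msg_mass s m != 0 -> (0 < #|cell s m|)%N.
Proof.
move=> ss sp; apply: contraNT; rewrite -leqNgt leqn0 => /eqP/cards0_eq cell0.
by rewrite /msg_mass msg_exp_partitional // cell0 big_set0.
Qed.

Lemma msg_mass_ge_cell s m w : msg_strategy s -> partitional s ->
  w \in cell s m -> mu0 w <= msg_mass s m.
Proof.
move=> ss sp w_in; rewrite /msg_mass msg_exp_partitional // (bigD1 w) //= mulr1 lerDl.
by apply: sumr_ge0 => w' _; rewrite mulr1; exact: prior.1.
Qed.

Definition shift_msg s m1 m2 eps : Om -> M -> R :=
  fun w m => s w m + eps * s w m2 * ((m == m1)%:R - (m == m2)%:R).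

Lemma shift_msg_strategy s m1 m2 eps : msg_strategy s -> m1 != m2 -> 0 <= eps <= 1 ->
  msg_strategy (shift_msg s m1 m2 eps).
Proof.
move=> ss m12 /andP[eps_ge0 eps_le1] w; have [s_ge0 s_sum] := ss w; split=> [m|].
  rewrite /shift_msg; have [->|m_ne1] := eqVneq m m1.
    by rewrite (negbTE m12) subr0 mulr1 addr_ge0 ?mulr_ge0.
  have [->|m_ne2] := eqVneq m m2; last by rewrite subrr mulr0 addr0.
  have -> : s w m2 + eps * s w m2 * (0 - 1) = s w m2 * (1 - eps) by ring.
  by rewrite mulr_ge0 ?subr_ge0.
by rewrite /shift_msg big_split /= -mulr_sumr sumrB !sum_delta1 subrr mulr0 addr0.
Qed.

Lemma msg_exp_shift s m1 m2 eps m h : msg_exp (shift_msg s m1 m2 eps) m h =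
  msg_exp s m h + eps * ((m == m1)%:R - (m == m2)%:R) * msg_exp s m2 h.
Proof.
by rewrite /msg_exp mulr_sumr -big_split /=; apply: eq_bigr => w _; rewrite /shift_msg; ring.
Qed.

Lemma U_shift_pure (v : A -> R) s f m1 m2 eps :
  U mu0 (fun a _ => v a) (shift_msg s m1 m2 eps) (pure_act f) =
  U mu0 (fun a _ => v a) s (pure_act f) + eps * msg_mass s m2 * (v (f m1) - v (f m2)).
Proof.
rewrite !U_pure; under eq_bigr do rewrite /msg_mass msg_exp_shift mulrDl.
rewrite big_split /=; congr (_ + _).
rewrite (eq_bigr (fun m => (m == m1)%:R * (eps * msg_mass s m2 * v (f m)) -
                           (m == m2)%:R * (eps * msg_mass s m2 * v (f m)))).
  by rewrite sumrB !sum_delta mulrBr.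
by move=> m _; rewrite /msg_mass; ring.
Qed.

Lemma shift_RBR u s f m1 m2 eps : msg_strategy s -> m1 != m2 -> 0 <= eps <= 1 ->
  best_selection u s f ->
  (forall b, eps * (msg_exp s m2 (u b) - msg_exp s m2 (u (f m1))) <=
             msg_exp s m1 (u (f m1)) - msg_exp s m1 (u b)) ->
  R_BR mu0 u (shift_msg s m1 m2 eps) (pure_act f).
Proof.
move=> ss m12 eps01 f_best f_m1_margin.
apply: pure_RBR; first exact: shift_msg_strategy.
move=> m b; rewrite !msg_exp_shift; have [->|m_ne1] := eqVneq m m1.
  by rewrite (negbTE m12) subr0 mulr1; have := f_m1_margin b; lra.
have [->|m_ne2] := eqVneq m m2; last by rewrite subrr mulr0 !mul0r !addr0; exact: f_best.
have scale x : x + eps * (0 - 1) * x = (1 - eps) * x by ring.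
case/andP: eps01 => _ eps_le1.
by rewrite !scale ler_wpM2l ?subr_ge0 //; exact: f_best.
Qed.

End Signaling.

Section GenericEnvironment.
Context {R : realType} {A Om M : finType}.
Variable mu0 : Om -> R.
Hypothesis mu0_gt0 : forall w, 0 < mu0 w.
Hypothesis mu0_sum : \sum_(w : Om) mu0 w = 1.
Variables (v : A -> R) (u : A -> Om -> R).
Hypothesis v01 : forall a, 0 <= v a <= 1.
Hypothesis u01 : forall a w, 0 <= u a w <= 1.
Hypothesis v_inj : injective v.
Hypothesis u_tie_free : tie_free mu0 u.
Variables (m0 : M) (a0 : A).
Hypothesis a0_opt : forall b, prior_exp mu0 (u b) <= prior_exp mu0 (u a0).

Implicit Types (s : Om -> M -> R) (r : M -> A -> R).

Local Notation V := (fun a (_ : Om) => v a).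
Local Notation msg_exp := (msg_exp mu0).
Local Notation msg_mass := (msg_mass mu0).
Local Notation prior_exp := (prior_exp mu0).

Let prior : is_distr mu0 := conj (fun w => ltW (mu0_gt0 w)) mu0_sum.

Lemma v_gap : exists2 G, 0 < G & forall a b, a != b -> G <= `|v a - v b|.
Proof.
have [|G G_gt0 G_le] := fin_pos_lower_bound (P := fun p : A * A => p.1 != p.2)
    (f := fun p => `|v p.1 - v p.2|).
  by move=> [a b]; rewrite /= normr_gt0 subr_eq0 (inj_eq v_inj).
by exists G => // a b ab; exact: (G_le (a, b)).
Qed.

Lemma partitional_margin : exists2 eta, 0 < eta & forall s m a b,
  msg_strategy s -> partitional s -> msg_mass s m != 0 -> a != b ->
  eta <= `|msg_exp s m (u a) - msg_exp s m (u b)|.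
Proof.
have [|eta eta_gt0 eta_le] := fin_pos_lower_bound
    (P := fun t : {set Om} * A * A => (0 < #|t.1.1|)%N && (t.1.2 != t.2))
    (f := fun t => `|\sum_(w in t.1.1) mu0 w * u t.1.2 w - \sum_(w in t.1.1) mu0 w * u t.2 w|).
  by move=> [[C a] b] /andP[C_gt0 ab]; rewrite /= normr_gt0 subr_eq0 u_tie_free.
exists eta => // s m a b ss sp m_used ab.
rewrite !msg_exp_partitional //; apply: (eta_le (cell s m, a, b)).
by rewrite /= ab (partitional_used_cell ss sp m_used).
Qed.

Lemma used_msg_mass_lb : exists2 p, 0 < p & forall s m,
  msg_strategy s -> partitional s -> msg_mass s m != 0 -> p <= msg_mass s m.
Proof.
have [p p_gt0 p_le] := fin_pos_lower_bound (P := xpredT) (fun w _ => mu0_gt0 w).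
exists p => // s m ss sp /(partitional_used_cell ss sp)/card_gt0P[w w_in].
exact: le_trans (p_le w isT) (msg_mass_ge_cell prior ss sp w_in).
Qed.

Lemma prior_near_opt_eq : exists2 eta, 0 < eta & forall a,
  prior_exp (u a0) - prior_exp (u a) < eta -> a = a0.
Proof.
have [eta eta_gt0 margin] := partitional_margin.
exists eta => // a; apply: contraTeq; rewrite eq_sym -leNgt => a0a.
have mass1 : msg_mass (const_msg m0) m0 != 0.
  by rewrite /msg_mass msg_exp_const_msg eqxx mul1r prior_exp_const ?oner_neq0.
have := margin _ _ _ _ (const_msg_strategy m0) (const_msg_partitional m0) mass1 a0a.
by rewrite !msg_exp_const_msg eqxx !mul1r ger0_norm // subr_ge0.
Qed.

Lemma babbling_RBR : R_BR mu0 u (const_msg m0) (pure_act (fun=> a0)).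
Proof.
apply: pure_RBR => [|m b]; first exact: const_msg_strategy.
by rewrite !msg_exp_const_msg ler_wpM2l ?ler0n.
Qed.

Lemma babbling_value : U mu0 V (const_msg m0) (pure_act (fun=> a0)) = v a0.
Proof. by rewrite U_const_act //; exact: const_msg_strategy. Qed.

Lemma persuasion_payoff_ge s r :
  R_BR mu0 u s r -> U mu0 V s r <= persuasion_payoff M mu0 V u.
Proof.
move=> sr_RBR; apply: le_sup_bounded; first by exists s, r.
by move=> _ [s' [r' [[ss [rr _]] ->]]]; exact: U_le1.
Qed.

Lemma cheap_talk_has_sup : has_sup [set x | exists s r,
  S_BR mu0 V s r /\ R_BR mu0 u s r /\ x = U mu0 V s r].
Proof.
split; last by exists 1 => _ [s [r [_ [[ss [rr _]] ->]]]]; exact: U_le1.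
exists (v a0), (const_msg m0), (pure_act (fun=> a0)).
split; first exact/const_act_SBR/const_msg_strategy.
by split; [exact: babbling_RBR | rewrite babbling_value].
Qed.

Lemma partitional_has_sup : has_sup [set x | exists s r,
  R_BR mu0 u s r /\ partitional s /\ x = U mu0 V s r].
Proof.
split; last by exists 1 => _ [s [r [[ss [rr _]] [_ ->]]]]; exact: U_le1.
exists (v a0), (const_msg m0), (pure_act (fun=> a0)).
split; first exact: babbling_RBR.
by split; [exact: const_msg_partitional | rewrite babbling_value].
Qed.

Lemma babbling_le_cheap_talk : v a0 <= cheap_talk_payoff M mu0 V u.
Proof.
apply: sup_upper_bound cheap_talk_has_sup _ _.
exists (const_msg m0), (pure_act (fun=> a0)).
split; first exact/const_act_SBR/const_msg_strategy.
by split; [exact: babbling_RBR | rewrite babbling_value].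
Qed.

Lemma babbling_le_partitional : v a0 <= partitional_persuasion_payoff M mu0 V u.
Proof.
apply: sup_upper_bound partitional_has_sup _ _.
exists (const_msg m0), (pure_act (fun=> a0)); split; first exact: babbling_RBR.
by split; [exact: const_msg_partitional | rewrite babbling_value].
Qed.

Lemma cheap_talk_payoff_approx e : 0 < e -> exists s r,
  [/\ S_BR mu0 V s r, R_BR mu0 u s r & cheap_talk_payoff M mu0 V u - e < U mu0 V s r].
Proof.
move=> e_gt0; have [_ [s [r [sr_SBR [sr_RBR ->]]]] near] := sup_adherent e_gt0 cheap_talk_has_sup.
by exists s, r.
Qed.

Lemma partitional_payoff_approx e : 0 < e -> exists s r,
  [/\ R_BR mu0 u s r, partitional s &
      partitional_persuasion_payoff M mu0 V u - e < U mu0 V s r].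
Proof.
move=> e_gt0; have [_ [s [r [sr_RBR [sp ->]]]] near] := sup_adherent e_gt0 partitional_has_sup.
by exists s, r.
Qed.

(* Diverting a little of a message inducing a low-value action to one inducing a
   high-value action keeps both actions optimal, because a partitional posterior
   never leaves the Receiver indifferent; the gain is bounded below uniformly. *)
Lemma partitional_improvable : exists2 gam, 0 < gam & forall s f m1 m2,
  msg_strategy s -> partitional s -> best_selection mu0 u s f ->
  msg_mass s m1 != 0 -> msg_mass s m2 != 0 -> f m1 != f m2 ->
  exists s' r', R_BR mu0 u s' r' /\ U mu0 V s (pure_act f) + gam <= U mu0 V s' r'.
Proof.
have [G G_gt0 v_sep] := v_gap.
have [eta eta_gt0 margin] := partitional_margin.
have [p p_gt0 p_le] := used_msg_mass_lb.
pose eps := Num.min eta 1.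
have eps_gt0 : 0 < eps by rewrite lt_min eta_gt0 ltr01.
have eps01 : 0 <= eps <= 1 by rewrite ltW //= ge_min lexx orbT.
exists (eps * p * G) => [|s f m1 m2 ss sp f_best]; first by rewrite !mulr_gt0.
wlog v12 : m1 m2 / v (f m2) < v (f m1).
  move=> hwlog m1_used m2_used f12.
  case: (ltgtP (v (f m2)) (v (f m1))) => [v12|v21|/v_inj f21].
  - exact: (hwlog m1 m2).
  - by apply: (hwlog m2 m1); rewrite // eq_sym.
  - by rewrite f21 eqxx in f12.
move=> m1_used m2_used f12; have m12 : m1 != m2 by apply: contraNneq f12 => ->.
exists (shift_msg s m1 m2 eps), (pure_act f); split.
  apply: shift_RBR => // b; have [->|b_ne] := eqVneq b (f m1); first by rewrite !subrr mulr0.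
  have := margin s m1 _ _ ss sp m1_used b_ne.
  rewrite distrC ger0_norm ?subr_ge0; last exact: f_best.
  move=> gap; apply: le_trans gap.
  apply: le_trans (_ : eps * 1 <= eta); last by rewrite mulr1 ge_min lexx.
  apply: ler_wpM2l; first by case/andP: eps01.
  have /andP[_ ?] := msg_exp_bounds prior m2 ss (u01 b).
  have /andP[? _] := msg_exp_bounds prior m2 ss (u01 (f m1)).
  have := msg_mass_le1 prior m2 ss; lra.
rewrite U_shift_pure lerD2l; apply: ler_pM.
- by rewrite mulr_ge0 // ltW.
- exact: ltW.
- by rewrite ler_pM2l // p_le.
by have := v_sep _ _ f12; rewrite ger0_norm // subr_ge0 ltW.
Qed.

Lemma persuasion_le_babbling_of_partitional :
  persuasion_payoff M mu0 V u <= partitional_persuasion_payoff M mu0 V u ->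
  persuasion_payoff M mu0 V u <= v a0.
Proof.
move=> P_le_PP; have [gam gam_gt0 improve] := partitional_improvable.
have [eta eta_gt0 a0_unique] := prior_near_opt_eq.
have [eta' eta'_gt0 margin] := partitional_margin.
apply/ler_addgt0Pr => e e_gt0.
have d_gt0 : 0 < Num.min e gam by rewrite lt_min e_gt0.
have [d_le_e d_le_gam] : Num.min e gam <= e /\ Num.min e gam <= gam by rewrite !ge_min !lexx orbT.
have [s [r [sr_RBR sp near]]] := partitional_payoff_approx d_gt0.
have ss := sr_RBR.1; have [f f_best _] := exists_best_selection_max mu0 u s v a0.
have Ur : U mu0 V s r = U mu0 V s (pure_act f).
  apply: RBR_unique_pure sr_RBR f_best _ => m a m_used a_ne.
  rewrite -subr_eq0 -normr_gt0; exact: lt_le_trans (margin _ _ _ _ ss sp m_used a_ne).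
have [m1 m1_used] := exists_used_msg prior ss.
have f_const m : msg_mass s m != 0 -> f m = f m1.
  move=> m_used; apply/eqP; apply: contraT => f_ne.
  have [s' [r' [s'r'_RBR gain]]] := improve s f m m1 ss sp f_best m_used m1_used f_ne.
  have := persuasion_payoff_ge s'r'_RBR; lra.
have U_f : U mu0 V s (pure_act f) = v (f m1).
  rewrite U_pure -[RHS]mul1r -(msg_mass_sum prior ss) mulr_suml.
  by apply: eq_bigr => m _; have [->|/f_const ->] := eqVneq (msg_mass s m) 0; rewrite ?mul0r.
have f_m1 : f m1 = a0.
  apply: a0_unique; apply: le_lt_trans (prior_exp_loss prior (f m1) a0 ss u01 f_best) _.
  by rewrite big1 // => m; apply: contraNeq => /f_const ->.
by move: U_f; rewrite f_m1; lra.
Qed.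

Lemma persuasion_le_babbling_of_cheap_talk :
  persuasion_payoff M mu0 V u <= cheap_talk_payoff M mu0 V u ->
  persuasion_payoff M mu0 V u <= v a0.
Proof.
move=> P_le_CT; have [G G_gt0 v_sep] := v_gap.
have [eta eta_gt0 a0_unique] := prior_near_opt_eq.
apply/ler_addgt0Pr => e e_gt0.
have d_gt0 : 0 < Num.min e (G * eta) by rewrite lt_min e_gt0 mulr_gt0.
have [d_le_e d_le_Geta] : Num.min e (G * eta) <= e /\ Num.min e (G * eta) <= G * eta.
  by rewrite !ge_min !lexx orbT.
have [s [r [sr_SBR sr_RBR near]]] := cheap_talk_payoff_approx d_gt0.
have ss := sr_RBR.1; have [f f_best f_max] := exists_best_selection_max mu0 u s v a0.
have K_le m : msg_mass s m != 0 -> U mu0 V s r <= v (f m).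
  move=> m_used; rewrite -(SBR_msg_value_used prior sr_SBR m_used).
  exact: RBR_value_le_max sr_RBR f_best (f_max m).
have [m1 m1_used] := exists_used_msg prior ss.
case: (arg_minP (P := fun m => msg_mass s m != 0) (fun m => v (f m)) m1_used).
move=> m_min m_min_used m_min_le; set a := f m_min.
set H := \sum_(m | f m != a) msg_mass s m.
have GH : G * H <= U mu0 V s (pure_act f) - v a.
  rewrite U_pure -[X in _ - X]mul1r -(msg_mass_sum prior ss) mulr_suml -sumrB.
  rewrite /H mulr_sumr big_mkcond /=; apply: ler_sum => m _.
  rewrite -mulrBr; have [->|m_used] := eqVneq (msg_mass s m) 0.
    by rewrite mulr0 mul0r; case: ifP.
  have a_le : v a <= v (f m) by exact: m_min_le.
  case: ifP => [f_ne|_]; last by rewrite mulr_ge0 ?msg_mass_ge0 ?subr_ge0.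
  rewrite mulrC ler_wpM2l ?msg_mass_ge0 //.
  by have := v_sep _ _ f_ne; rewrite ger0_norm // subr_ge0.
have H_lt : H < eta.
  rewrite -(ltr_pM2l G_gt0); have := persuasion_payoff_ge (pure_RBR ss f_best).
  have := K_le _ m_min_used; lra.
have a_a0 : a = a0 by apply/a0_unique/(le_lt_trans (prior_exp_loss prior a a0 ss u01 f_best)).
have := K_le _ m_min_used; rewrite -/a a_a0; lra.
Qed.

Lemma commitment_valuable_iff_values_randomization :
  commitment_valuable M mu0 V u <-> values_randomization M mu0 V u.
Proof.
have CT_a0 : (persuasion_payoff M mu0 V u <= cheap_talk_payoff M mu0 V u) =
             (persuasion_payoff M mu0 V u <= v a0).
  apply/idP/idP; first exact: persuasion_le_babbling_of_cheap_talk.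
  by move/le_trans; apply; exact: babbling_le_cheap_talk.
have PP_a0 : (persuasion_payoff M mu0 V u <= partitional_persuasion_payoff M mu0 V u) =
             (persuasion_payoff M mu0 V u <= v a0).
  apply/idP/idP; first exact: persuasion_le_babbling_of_partitional.
  by move/le_trans; apply; exact: babbling_le_partitional.
by rewrite /commitment_valuable /values_randomization !ltNge CT_a0 PP_a0.
Qed.

End GenericEnvironment.

Section LebesgueNull.
Context {R : realType} {I : finType}.
Implicit Types (N : (I -> R) -> Prop) (a b c x : I -> R).

Lemma box_vol_ge0 a b : (forall i, a i <= b i) -> 0 <= box_vol a b.
Proof. by move=> ab; apply: prodr_ge0 => i _; rewrite subr_ge0. Qed.

(* Over an empty index type every box has volume 1, hence the witness [i0]. *)
Lemma box_vol0 (i0 : I) : box_vol (fun _ : I => 0) (fun=> 0) = 0 :> R.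
Proof. by rewrite /box_vol (bigD1 i0) //= subrr mul0r. Qed.

Lemma lebesgue_null_subset N1 N2 :
  (forall x, N1 x -> N2 x) -> lebesgue_null N2 -> lebesgue_null N1.
Proof.
move=> N12 N2_null eps eps_gt0; have [a [b [ab [ab_cover ab_vol]]]] := N2_null eps eps_gt0.
by exists a, b; split=> //; split=> // x /N12 /ab_cover.
Qed.

Lemma lebesgue_null0 (i0 : I) : lebesgue_null (fun _ : I -> R => False).
Proof.
move=> eps eps_gt0; exists (fun _ _ => 0), (fun _ _ => 0); split=> //; split=> // n.
by rewrite big1 ?ltW // => k _; exact: box_vol0.
Qed.

Lemma sum_ord_mono (F : nat -> R) n m : (n <= m)%N -> (forall k, 0 <= F k) ->
  \sum_(k < n) F k <= \sum_(k < m) F k.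
Proof.
move=> nm F_ge0; rewrite (big_ord_widen m F nm) [leRHS](bigID (fun k : 'I_m => (k < n)%N)) /=.
by rewrite lerDl; apply: sumr_ge0.
Qed.

Lemma sum_ord_double (F : nat -> R) n :
  \sum_(k < n.*2) F k = \sum_(k < n) F k.*2 + \sum_(k < n) F k.*2.+1.
Proof.
elim: n => [|n IHn]; first by rewrite !big_ord0 addr0.
by rewrite doubleS !big_ord_recr /= IHn; ring.
Qed.

Lemma lebesgue_nullU N1 N2 : lebesgue_null N1 -> lebesgue_null N2 ->
  lebesgue_null (fun x => N1 x \/ N2 x).
Proof.
move=> N1_null N2_null eps eps_gt0; have eps2_gt0 : 0 < eps / 2 by rewrite divr_gt0.
have [a1 [b1 [ab1 [cover1 vol1]]]] := N1_null _ eps2_gt0.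
have [a2 [b2 [ab2 [cover2 vol2]]]] := N2_null _ eps2_gt0.
pose mix (c1 c2 : nat -> I -> R) k := if odd k then c2 k./2 else c1 k./2.
exists (mix a1 a2), (mix b1 b2); split=> [k i|]; first by rewrite /mix; case: ifP.
split=> [x [/cover1[k xk]|/cover2[k xk]]|n].
- by exists k.*2; rewrite /mix odd_double half_double.
- by exists k.*2.+1; rewrite /mix /= odd_double uphalf_double.
pose F k := box_vol (mix a1 a2 k) (mix b1 b2 k).
have F_ge0 k : 0 <= F k by apply: box_vol_ge0 => i; rewrite /F /mix; case: ifP.
apply: le_trans (sum_ord_mono (_ : n <= n.*2)%N F_ge0) _; first by rewrite -addnn leq_addr.
rewrite sum_ord_double /F /mix.
under eq_bigr do rewrite odd_double half_double.
under [X in _ + X]eq_bigr do rewrite /= odd_double uphalf_double.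
by have := vol1 n; have := vol2 n; lra.
Qed.

Lemma lebesgue_null_fin (i0 : I) (T : finType) (N : T -> (I -> R) -> Prop) :
  (forall t, lebesgue_null (N t)) -> lebesgue_null (fun x => exists t, N t x).
Proof.
move=> N_null; suff: lebesgue_null (fun x => exists2 t, t \in enum T & N t x).
  by apply: lebesgue_null_subset => x [t]; exists t; rewrite ?mem_enum.
elim: (enum T) => [|t s IHs].
  by apply: lebesgue_null_subset (lebesgue_null0 i0) => x [].
apply: lebesgue_null_subset (lebesgue_nullU (N_null t) IHs) => x [t'].
by rewrite inE => /orP[/eqP-> | t's] Nt'x; [left | right; exists t'].
Qed.

Lemma sum_ord_le_support (F : nat -> R) n m : (forall k, 0 <= F k) ->
  (forall k, (m <= k)%N -> F k = 0) -> \sum_(k < n) F k <= \sum_(k < m) F k.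
Proof.
move=> F_ge0 F0; apply: le_trans (sum_ord_mono (leq_maxl n m) F_ge0) _.
have tail0 : \sum_(m <= k < maxn n m) F k = 0.
  by rewrite big_nat_cond big1 // => k /andP[/andP[/F0]].
by rewrite -!(big_mkord xpredT) (big_cat_nat (leq0n m) (leq_maxr n m)) /= tail0 addr0.
Qed.

Lemma lebesgue_null_finite_cover (i0 : I) N :
  (forall eps, 0 < eps -> exists (T : finType) (a b : T -> I -> R),
     [/\ forall t i, a t i <= b t i, forall x, N x -> exists t, in_box (a t) (b t) x
       & \sum_(t : T) box_vol (a t) (b t) <= eps]) ->
  lebesgue_null N.
Proof.
move=> cover eps eps_gt0; have [T [a [b [ab ab_cover ab_vol]]]] := cover eps eps_gt0.
pose seqn (c : T -> I -> R) k : I -> R :=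
  if insub k is Some t then c (enum_val (t : 'I_#|T|)) else fun=> 0.
have seqn_le k i : seqn a k i <= seqn b k i by rewrite /seqn; case: insub.
exists (seqn a), (seqn b); split=> //; split=> [x /ab_cover[t xt]|n].
  by exists (enum_rank t); rewrite /seqn valK enum_rankK.
pose F k := box_vol (seqn a k) (seqn b k).
have F_ge0 k : 0 <= F k by exact: box_vol_ge0.
have F0 k : (#|T| <= k)%N -> F k = 0.
  by move=> kT; rewrite /F /seqn insubN -?leqNgt // (box_vol0 i0).
apply: le_trans (sum_ord_le_support n F_ge0 F0) _.
apply: le_trans ab_vol; rewrite [leRHS](big_enum_val (A := predT)) /=.
by under eq_bigr do rewrite /F /seqn valK.
Qed.

Lemma grid_cell n (y : R) : (0 < n)%N -> 0 <= y <= 1 ->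
  exists k : 'I_n, k%:R / n%:R <= y <= k%:R / n%:R + n%:R^-1.
Proof.
case: n => [//|n] _ /andP[y_ge0 y_le1]; have n_gt0 : 0 < n.+1%:R :> R by rewrite ltr0n.
suff [k k_cell] : exists k : 'I_n.+1, k%:R / n.+1%:R <= y <= k.+1%:R / n.+1%:R.
  by exists k; rewrite -[k.+1%:R]natr1 mulrDl mul1r in k_cell.
have /andP[t_le t_gt] := truncn_itv (mulr_ge0 y_ge0 (ltW n_gt0)).
set t := Num.truncn _ in t_le t_gt.
have [t_lt|t_ge] := ltnP t n.+1.
  by exists (Ordinal t_lt); rewrite /= ler_pdivrMr // ler_pdivlMr // t_le ltW.
have y1 : y = 1.
  apply/le_anti; rewrite y_le1 /= -(ler_pM2r n_gt0) mul1r.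
  by apply: le_trans t_le; rewrite ler_nat.
by exists ord_max; rewrite y1 /= divff ?gt_eqF // lexx andbT ler_pdivrMr // mul1r ler_nat.
Qed.

Lemma hyperplane_coord_near c x p (j : I) d : c j != 0 -> 0 <= d ->
  \sum_i c i * x i = 0 -> (forall i, i != j -> `|x i - p i| <= d) ->
  `|x j + (\sum_(i | i != j) c i * p i) / c j| <= (\sum_i `|c i|) / `|c j| * d.
Proof.
move=> cj_ne0 d_ge0 on_plane x_near.
have xj : x j = - (\sum_(i | i != j) c i * x i) / c j.
  move: on_plane; rewrite (bigD1 j) //= => /eqP; rewrite addrC addr_eq0 => /eqP ->.
  by rewrite opprK [c j * _]mulrC mulfK.
have -> : x j + (\sum_(i | i != j) c i * p i) / c j =
          - (\sum_(i | i != j) c i * (x i - p i)) / c j.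
  by rewrite xj; under [in RHS]eq_bigr do rewrite mulrBr; rewrite sumrB; field.
rewrite normrM normrN normfV mulrAC ler_pM2r ?invr_gt0 ?normr_gt0 //.
apply: le_trans (ler_norm_sum _ _ _) _.
apply: (@le_trans _ _ (\sum_(i | i != j) `|c i| * d)).
  by apply: ler_sum => i ij; rewrite normrM ler_wpM2l ?x_near.
by rewrite -mulr_suml ler_wpM2r // [leRHS](bigD1 j) //= lerDr.
Qed.

Lemma sum_box_vol_translates (T : finType) (lo : T -> I -> R) (w : I -> R) :
  \sum_(t : T) box_vol (lo t) (fun i => lo t i + w i) = #|T|%:R * \prod_i w i.
Proof.
rewrite [LHS](eq_bigr (fun=> \prod_i w i)) => [|t _]; last first.
  by rewrite /box_vol /=; apply: eq_bigr => i _; rewrite addrAC subrr add0r.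
by rewrite sumr_const mulr_natl.
Qed.

Section HyperplaneGrid.
Variables (c : I -> R) (j : I) (n : nat).
Hypotheses (cj_ne0 : c j != 0) (n_pos : (0 < n)%N).

(* Over the cell [g] of the grid of mesh [1/n] in the coordinates other than
   [j], the hyperplane stays within [slab_radius] of [slab_center g] in
   coordinate [j]; that slab is cut into [n] pieces, so that all boxes are
   indexed by [{ffun I -> 'I_n}]. *)
Definition slab_radius : R := (\sum_i `|c i|) / `|c j| / n%:R.

Definition slab_center (g : {ffun I -> 'I_n}) : R :=
  - (\sum_(i | i != j) c i * ((g i)%:R / n%:R)) / c j.

Definition grid_width i : R := n%:R^-1 * (if i == j then 2 * slab_radius else 1).

Definition grid_lo (g : {ffun I -> 'I_n}) i : R :=
  if i == j then slab_center g - slab_radius + grid_width i * (g i)%:R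
  else (g i)%:R / n%:R.

Let n_gt0 : 0 < n%:R :> R. Proof. by rewrite ltr0n. Qed.

Lemma slab_radius_gt0 : 0 < slab_radius.
Proof.
rewrite !divr_gt0 ?normr_gt0 // (bigD1 j) //=.
by rewrite ltr_pwDl ?sumr_ge0 ?normr_gt0.
Qed.

Lemma grid_width_ge0 i : 0 <= grid_width i.
Proof.
rewrite /grid_width mulr_ge0 ?invr_ge0 ?ler0n //; case: ifP => // _.
by rewrite mulr_ge0 // ltW // slab_radius_gt0.
Qed.

Lemma hyperplane_grid_cover x : unit_cube x -> \sum_i c i * x i = 0 ->
  exists g, in_box (grid_lo g) (fun i => grid_lo g i + grid_width i) x.
Proof.
move=> x01 on_plane; have r_gt0 := slab_radius_gt0.
pose h : {ffun I -> 'I_n} := [ffun i => xchoose (grid_cell n_pos (x01 i))].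
have h_cell i : (h i)%:R / n%:R <= x i <= (h i)%:R / n%:R + n%:R^-1.
  by rewrite ffunE; exact: (xchooseP (grid_cell n_pos (x01 i))).
have xj_near : `|x j - slab_center h| <= slab_radius.
  rewrite /slab_center mulNr opprK.
  apply: (hyperplane_coord_near (p := fun i => (h i)%:R / n%:R)) => // [|i _].
    by rewrite invr_ge0 ltW.
  by have /andP[? ?] := h_cell i; rewrite ler_norml; apply/andP; split; lra.
pose y := (x j - (slab_center h - slab_radius)) / (2 * slab_radius).
have W_gt0 : 0 < 2 * slab_radius by rewrite mulr_gt0.
have y01 : 0 <= y <= 1.
  move: xj_near; rewrite ler_norml => /andP[? ?].
  apply/andP; split; first by rewrite divr_ge0 ?(ltW W_gt0) //; lra.
  by rewrite ler_pdivrMr // mul1r; lra.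
have [k /andP[k_le k_ge]] := grid_cell n_pos y01.
rewrite ler_pdivlMr // in k_le; rewrite ler_pdivrMr // in k_ge.
pose g : {ffun I -> 'I_n} := [ffun i => if i == j then k else h i].
have center_g : slab_center g = slab_center h.
  by congr (- _ / _); apply: eq_bigr => i ij; rewrite ffunE (negbTE ij).
exists g => i; rewrite /grid_lo /grid_width ffunE; case: eqVneq => [->|_].
  by rewrite center_g; apply/andP; split; lra.
by rewrite mulr1; exact: h_cell.
Qed.

Lemma hyperplane_grid_vol :
  \sum_(g : {ffun I -> 'I_n}) box_vol (grid_lo g) (fun i => grid_lo g i + grid_width i) =
  2 * slab_radius.
Proof.
rewrite sum_box_vol_translates card_ffun card_ord natrX /grid_width big_split prodr_const /=.
rewrite (bigD1 j) //= eqxx big1 => [|i /negbTE -> //]; rewrite mulr1 mulrA -exprMn.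
by rewrite mulfV ?gt_eqF // expr1n mul1r.
Qed.

End HyperplaneGrid.

Lemma lebesgue_null_hyperplane c (j : I) : c j != 0 ->
  lebesgue_null (fun x => unit_cube x /\ \sum_i c i * x i = 0).
Proof.
move=> cj_ne0; apply: (lebesgue_null_finite_cover j) => eps eps_gt0.
pose K := (\sum_i `|c i|) / `|c j|.
have K_ge0 : 0 <= K by rewrite divr_ge0 ?sumr_ge0.
pose n := (Num.truncn (2 * K / eps)).+1.
exists {ffun I -> 'I_n}, (fun g => grid_lo c j g), (fun g i => grid_lo c j g i + grid_width c j n i).
split=> [g i|x [x01 on_plane]|]; first by rewrite lerDl grid_width_ge0.
  exact: hyperplane_grid_cover.
rewrite hyperplane_grid_vol // /slab_radius -/K mulrA ler_pdivrMr ?ltr0n // [leRHS]mulrC.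
have /andP[_] := truncn_itv (divr_ge0 (mulr_ge0 (ler0n _ 2) K_ge0) (ltW eps_gt0)).
by rewrite ltr_pdivrMr // => /ltW.
Qed.

Lemma lebesgue_null_hyperplanes (i0 : I) (T : finType) (P : pred T) (c : T -> I -> R) :
  (forall t, P t -> exists j, c t j != 0) ->
  lebesgue_null (fun x => unit_cube x /\ exists2 t, P t & \sum_i c t i * x i = 0).
Proof.
move=> c_ne0; pose N t x := P t /\ unit_cube x /\ \sum_i c t i * x i = 0.
apply: lebesgue_null_subset (lebesgue_null_fin i0 (N := N) _) => [x [x01 [t Pt on_t]]|t].
  by exists t.
have [Pt|nPt] := boolP (P t); last first.
  by apply: lebesgue_null_subset (lebesgue_null0 i0) => x []; rewrite (negbTE nPt).
have [j ctj_ne0] := c_ne0 t Pt.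
by apply: lebesgue_null_subset (lebesgue_null_hyperplane ctj_ne0) => x [].
Qed.

End LebesgueNull.

Section Environments.
Context {R : realType} {A Om : finType}.
Variable mu0 : Om -> R.
Hypothesis mu0_gt0 : forall w, 0 < mu0 w.
Implicit Type x : env_coord A Om -> R.

Definition value_tie_form (a b : A) (i : env_coord A Om) : R := (i == inl a)%:R - (i == inl b)%:R.

Definition cell_tie_form (C : {set Om}) (a b : A) (i : env_coord A Om) : R :=
  if i is inr (a', w) then (w \in C)%:R * mu0 w * ((a' == a)%:R - (a' == b)%:R) else 0.

Lemma value_tie_formE a b x : \sum_i value_tie_form a b i * x i = x (inl a) - x (inl b).
Proof. by rewrite /value_tie_form; under eq_bigr do rewrite mulrBl; rewrite sumrB !sum_delta. Qed.

Lemma cell_tie_formE C a b x : \sum_i cell_tie_form C a b i * x i =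
  \sum_(w in C) mu0 w * x (inr (a, w)) - \sum_(w in C) mu0 w * x (inr (b, w)).
Proof.
rewrite big_sumType /= big1 ?add0r => [|a' _]; last by rewrite mul0r.
pose F a' w := (a' == a)%:R * ((w \in C)%:R * mu0 w * x (inr (a', w))) -
               (a' == b)%:R * ((w \in C)%:R * mu0 w * x (inr (a', w))).
rewrite (eq_bigr (fun p => F p.1 p.2)) => [|[a' w] _]; last by rewrite /F /=; ring.
rewrite -(pair_bigA _ F) exchange_big -sumrB [RHS]big_mkcond /=.
apply: eq_bigr => w _; rewrite /F sumrB !sum_delta.
by case: (w \in C) => /=; ring.
Qed.

Definition generic_env x :=
  [/\ unit_cube x, injective (x \o inl) & tie_free mu0 (env_uR x)].

Lemma generic_env_full_measure (a1 : A) : full_measure_in_cube generic_env.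
Proof.
split=> [x [] //|].
pose value_tie_forms := lebesgue_null_hyperplanes (inl a1) (P := fun p : A * A => p.1 != p.2)
  (c := fun p => value_tie_form p.1 p.2).
pose cell_tie_forms := lebesgue_null_hyperplanes (inl a1)
  (P := fun t : {set Om} * A * A => (0 < #|t.1.1|)%N && (t.1.2 != t.2))
  (c := fun t => cell_tie_form t.1.1 t.1.2 t.2).
apply: lebesgue_null_subset (lebesgue_nullU (value_tie_forms _) (cell_tie_forms _)).
- move=> x [x01 not_generic]; apply: contra_notP not_generic => no_tie; split=> //.
    move=> a b /= xab; apply/eqP/contraT => ab; case: no_tie; left; split=> //.
    by exists (a, b); rewrite // value_tie_formE xab subrr.
  move=> C a b C_gt0 ab; apply/negP => /eqP tie; apply: no_tie; right; split=> //.
  by exists (C, a, b); rewrite /= ?C_gt0 // cell_tie_formE tie subrr.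
- move=> [a b] /= ab; exists (inl a).
  by rewrite /value_tie_form eqxx (inj_eq (@inl_inj _ _)) (negbTE ab) subr0 oner_neq0.
move=> [[C a] b] /andP[/card_gt0P[w w_in] ab] /=; exists (inr (a, w)).
by rewrite /cell_tie_form w_in eqxx (negbTE ab) subr0 !mulr1 mul1r gt_eqF.
Qed.
End Environments.

Theorem theorem4 (R : realType) (A Om M : finType) (mu0 : Om -> R)
  (hA : (0 < #|A|)%N) (hOm : (0 < #|Om|)%N)
  (hmu0 : forall w, 0 < mu0 w) (hmu1 : \sum_(w : Om) mu0 w = 1)
  (hM : (maxn #|Om| #|A| < #|M|)%N) :
  exists E : (env_coord A Om -> R) -> Prop,
    full_measure_in_cube E /\
    forall x, E x ->
      (commitment_valuable M mu0 (env_v x) (env_uR x) <->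
       values_randomization M mu0 (env_v x) (env_uR x)).
Proof.
(* The payoffs are suprema, so [hM] is only needed for [M] to be nonempty. *)
have /card_gt0P[m0 _] : (0 < #|M|)%N by exact: leq_ltn_trans hM.
have /card_gt0P[a1 _] := hA.
exists (generic_env mu0); split; first exact: generic_env_full_measure.
move=> x [x01 v_inj u_tie_free].
pose a0 := [arg max_(b > a1) prior_exp mu0 (env_uR x b)]%O.
have a0_opt b : prior_exp mu0 (env_uR x b) <= prior_exp mu0 (env_uR x a0).
  by rewrite /a0; case: arg_maxP => // a _; exact.
exact: (commitment_valuable_iff_values_randomization hmu0 hmu1
  (fun a => x01 (inl a)) (fun a w => x01 (inr (a, w))) v_inj u_tie_free m0 a0_opt).
Qed.
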